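(* For integers $n\ge 0$ and $i\ge 0$, \[ S_n(i+2)=S_n(i)-q^{i}S_{n+1}(i)+q^{i(n+1)}(1+q^i)(q;q^2)_{n+1}, \] where $S_m(i):=\sum_{j=0}^{m} \frac{q^{ij}(q;q)_{m+j}}{(q^2;q^2)_j}$.
   Context: $(a;q)_0:=1$ and $(a;q)_n:=(1-a)(1-aq)\cdots(1-aq^{n-1})$ for $n\ge1$. *)

From HB Require Import structures.
From mathcomp Require Import all_boot all_order all_algebra.
Set Implicit Arguments. Unset Strict Implicit. Unset Printing Implicit Defensive.
Import Order.TTheory GRing.Theory Num.Theory.
Local Open Scope ring_scope.

Definition qpoch (R : comRingType) (a q : R) (n : nat) : R :=
  \prod_(k < n) (1 - a * q ^+ k).

Definition S (F : fieldType) (q : F) (m i : nat) : F :=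
  \sum_(j < m.+1) q ^+ (i * j) * qpoch q q (m + j) / qpoch (q ^+ 2) (q ^+ 2) j.

(** The difference S_n(i) - S_n(i+2) has summands carrying the factor
    1 - q^(2j), which cancels the last factor of (q^2;q^2)_j; after the shift
    j = k+1 they become q^i times the summands of S_(n+1)(i) with k < n.
    What remains of q^i S_(n+1)(i) are its last two summands, which collapse
    to q^(i(n+1)) (q;q^2)_(n+1) and q^(i(n+2)) (q;q^2)_(n+1) by the parity
    splitting (a;q)_(2n) = (a;q^2)_n (aq;q^2)_n. *)

From HB Require Import structures.
From mathcomp Require Import all_boot all_order all_algebra.
From mathcomp Require Import ring.
Set Implicit Arguments. Unset Strict Implicit. Unset Printing Implicit Defensive.
Import GRing.Theory.
Local Open Scope ring_scope.

Section QPochhammer.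

Variable R : comNzRingType.
Implicit Types a q : R.

Lemma qpochS a q n : qpoch a q n.+1 = qpoch a q n * (1 - a * q ^+ n).
Proof. by rewrite /qpoch big_ord_recr. Qed.

Lemma qpoch_double a q n :
  qpoch a q n.*2 = qpoch a (q ^+ 2) n * qpoch (a * q) (q ^+ 2) n.
Proof.
elim: n => [|n IHn]; first by rewrite /qpoch !big_ord0 mulr1.
rewrite doubleS !qpochS IHn -exprM mul2n (exprS q n.*2).
ring.
Qed.

Lemma qpoch_double_odd a q n :
  qpoch a q n.*2.+1 = qpoch a (q ^+ 2) n.+1 * qpoch (a * q) (q ^+ 2) n.
Proof. by rewrite qpochS qpoch_double qpochS -exprM mul2n; ring. Qed.

Lemma qpochS_neq0 a q n : qpoch a q n.+1 != 0 -> qpoch a q n != 0.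
Proof. by apply: contraNneq; rewrite qpochS => ->; rewrite mul0r. Qed.

End QPochhammer.

Section Sums.

Variables (F : fieldType) (q : F).

Definition S_term (m i j : nat) : F :=
  q ^+ (i * j) * qpoch q q (m + j) / qpoch (q ^+ 2) (q ^+ 2) j.

Lemma S_sum m i : S q m i = \sum_(j < m.+1) S_term m i j.
Proof. by []. Qed.

Lemma S_term_subS_addn2 m i k :
  qpoch (q ^+ 2) (q ^+ 2) k.+1 != 0 ->
  S_term m i k.+1 - S_term m (i + 2) k.+1 = q ^+ i * S_term m.+1 i k.
Proof.
rewrite /S_term qpochS => Dk1_neq0.
have [Dk_neq0 fac_neq0] : qpoch (q ^+ 2) (q ^+ 2) k != 0
                         /\ 1 - q ^+ 2 * (q ^+ 2) ^+ k != 0.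
  by apply/andP; rewrite -negb_or -mulf_eq0.
rewrite addSnnS mulnDl exprD (exprM q 2 k.+1) [(q ^+ 2) ^+ k.+1]exprS.
rewrite mulnS exprD.
by field; rewrite Dk_neq0 fac_neq0.
Qed.

Lemma S_sub_addn2 m i :
  (forall j, (j <= m)%N -> qpoch (q ^+ 2) (q ^+ 2) j.+1 != 0) ->
  S q m i - S q m (i + 2) = q ^+ i * \sum_(k < m) S_term m.+1 i k.
Proof.
move=> D_neq0; rewrite !S_sum -sumrB big_ord_recl /S_term !muln0 subrr add0r.
rewrite mulr_sumr; apply: eq_bigr => k _.
exact: S_term_subS_addn2 (D_neq0 k (ltnW (ltn_ord k))).
Qed.

Lemma S_term_diag m i :
  qpoch (q ^+ 2) (q ^+ 2) m != 0 ->
  S_term m.+1 i m = q ^+ (i * m) * qpoch q (q ^+ 2) m.+1.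
Proof.
move=> Dm_neq0.
by rewrite /S_term addSn addnn qpoch_double_odd -expr2 mulrA mulfK.
Qed.

Lemma S_term_diagS m i :
  qpoch (q ^+ 2) (q ^+ 2) m.+1 != 0 ->
  S_term m.+1 i m.+1 = q ^+ (i * m.+1) * qpoch q (q ^+ 2) m.+1.
Proof.
move=> Dm1_neq0.
by rewrite /S_term addnn qpoch_double -expr2 mulrA mulfK.
Qed.

End Sums.

Theorem lemma3p2 (F : fieldType) (q : F) (n i : nat)
  (hq : forall j : nat, (j <= n.+1)%N -> qpoch (q ^+ 2) (q ^+ 2) j != 0) :
  S q n (i + 2) =
  S q n i - q ^+ i * S q n.+1 i
  + q ^+ (i * n.+1) * (1 + q ^+ i) * qpoch q (q ^+ 2) n.+1.
Proof.
have Dn1_neq0 := hq n.+1 (leqnn _).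
have Dn_neq0 := qpochS_neq0 Dn1_neq0.
have split_last : S q n.+1 i
    = \sum_(k < n) S_term q n.+1 i k + S_term q n.+1 i n + S_term q n.+1 i n.+1.
  by rewrite S_sum !big_ord_recr.
rewrite -[S q n (i + 2)](subKr (S q n i)) S_sub_addn2; last by move=> j hj; exact: hq j.+1 hj.
rewrite split_last S_term_diag // S_term_diagS // mulnS exprD.
ring.
Qed.
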